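(* Let $a>0$ and let $f:(0,\infty)\to(0,\infty)$ be twice continuously differentiable with $f'(x)>0$ and $f''(x)<0$ for all $x>0$, and $\lim_{x\to\infty}f(x)=\infty$. Suppose $x^*>0$ satisfies $f(x^*+1)\le a$. Then there exists a positive integer $n\ge x^*$ such that $0\le a-f(n)\le f'(x^* )$. *)

From Stdlib Require Import Reals.
From Coquelicot Require Export Coquelicot.
Open Scope R_scope.

Definition C2_on_pos (f : R -> R) : Prop :=
  forall x : R, 0 < x ->
    ex_derive f x /\ ex_derive (Derive f) x /\ continuous (Derive (Derive f)) x.

(* Monotonicity of [f] gives an integer [n0] in [[xs, xs + 1]] with [f n0 <= a],
   and [f -> +oo] gives a larger integer where [f > a]; in between there is a last
   integer [N >= n0] with [f N <= a < f (N + 1)].  By the mean value theorem and the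
   decrease of [f'], [a - f N < f (N + 1) - f N <= f' N <= f' xs]. *)
From Stdlib Require Import Reals Lra Lia ZArith Classical.
From Coquelicot Require Import Coquelicot.
Open Scope R_scope.

Lemma MVT_Derive (g : R -> R) (x y : R) :
  x <= y -> (forall z, x <= z <= y -> ex_derive g z) ->
  exists c, x <= c <= y /\ g y - g x = Derive g c * (y - x).
Proof.
  intros Hxy Hd.
  destruct (MVT_gen g x y (Derive g)) as [c [Hc Heq]];
    rewrite ?Rmin_left, ?Rmax_right in * by lra.
  - intros z Hz; apply Derive_correct, Hd; lra.
  - intros z Hz; apply continuity_pt_filterlim.
    apply (ex_derive_continuous (V := R_NormedModule)), Hd; lra.
  - exists c; split; assumption.
Qed.

Lemma le_of_Derive_nonneg (g : R -> R) (x y : R) :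
  x <= y -> (forall z, x <= z <= y -> ex_derive g z /\ 0 <= Derive g z) ->
  g x <= g y.
Proof.
  intros Hxy Hd.
  destruct (MVT_Derive g x y Hxy) as [c [Hc E]]; [now intros z Hz; apply Hd|].
  assert (0 <= Derive g c) by (apply Hd; lra).
  nra.
Qed.

Lemma ge_of_Derive_nonpos (g : R -> R) (x y : R) :
  x <= y -> (forall z, x <= z <= y -> ex_derive g z /\ Derive g z <= 0) ->
  g y <= g x.
Proof.
  intros Hxy Hd.
  destruct (MVT_Derive g x y Hxy) as [c [Hc E]]; [now intros z Hz; apply Hd|].
  assert (Derive g c <= 0) by (apply Hd; lra).
  nra.
Qed.

Lemma sub_le_Derive_mul (g : R -> R) (x y : R) :
  x <= y -> (forall z, x <= z <= y -> ex_derive g z /\ Derive g z <= Derive g x) ->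
  g y - g x <= Derive g x * (y - x).
Proof.
  intros Hxy Hd.
  destruct (MVT_Derive g x y Hxy) as [c [Hc E]]; [now intros z Hz; apply Hd|].
  assert (Derive g c <= Derive g x) by (apply Hd; lra).
  nra.
Qed.

Lemma exists_last_before_failure (P : nat -> Prop) (k n0 : nat) :
  P n0 -> ~ P (n0 + k)%nat ->
  exists n, (n0 <= n)%nat /\ P n /\ ~ P (S n).
Proof.
  revert n0; induction k as [|k IH]; intros n0 Hn0 Hk.
  - now rewrite Nat.add_0_r in Hk.
  - destruct (classic (P (S n0))) as [HS|HS].
    + destruct (IH (S n0) HS) as [n [Hn HPn]].
      * now rewrite Nat.add_succ_r in Hk.
      * exists n; split; [lia | exact HPn].
    + exists n0; split; [lia | now split].
Qed.

Lemma exists_nat_ge_le_add1 (x : R) :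
  0 < x -> exists n : nat, (1 <= n)%nat /\ x <= INR n <= x + 1.
Proof.
  intros Hx.
  destruct (archimed x) as [Hup1 Hup2].
  assert (Hu : (0 < up x)%Z) by (apply lt_0_IZR; lra).
  exists (Z.to_nat (up x)).
  rewrite INR_IZR_INZ, Z2Nat.id by lia.
  split; [lia | lra].
Qed.

Lemma exists_nat_gt_of_lim (g : R -> R) (a : R) (n0 : nat) :
  is_lim g p_infty p_infty -> exists k : nat, a < g (INR (n0 + k)).
Proof.
  intros Hlim.
  destruct (Hlim (fun y => a < y)) as [M HM]; [now exists a|].
  destruct (INR_unbounded M) as [k Hk].
  exists k; apply HM.
  rewrite plus_INR; pose proof (pos_INR n0); lra.
Qed.

Theorem lemma6p1 (a : R) (f : R -> R) (xs : R)
  (ha : 0 < a)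
  (hpos : forall x : R, 0 < x -> 0 < f x)
  (hC2 : C2_on_pos f)
  (hd1 : forall x : R, 0 < x -> 0 < Derive f x)
  (hd2 : forall x : R, 0 < x -> Derive (Derive f) x < 0)
  (hlim : is_lim f p_infty p_infty)
  (hxs : 0 < xs)
  (hfx : f (xs + 1) <= a) :
  exists n : nat, (1 <= n)%nat /\ xs <= INR n /\
    0 <= a - f (INR n) <= Derive f xs.
Proof.
  assert (f_mono : forall x y, 0 < x -> x <= y -> f x <= f y).
  { intros x y Hx Hxy; apply le_of_Derive_nonneg; [lra|].
    intros z Hz; split; [apply hC2 | apply Rlt_le, hd1]; lra. }
  assert (Df_anti : forall x y, 0 < x -> x <= y -> Derive f y <= Derive f x).
  { intros x y Hx Hxy; apply ge_of_Derive_nonpos; [lra|].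
    intros z Hz; split; [apply hC2 | apply Rlt_le, hd2]; lra. }
  destruct (exists_nat_ge_le_add1 xs hxs) as [n0 [Hn0 [Hxn0 Hn0x]]].
  assert (Hfn0 : f (INR n0) <= a) by (apply Rle_trans with (f (xs + 1)); auto; apply f_mono; lra).
  destruct (exists_nat_gt_of_lim f a n0 hlim) as [k Hk].
  destruct (exists_last_before_failure (fun n => f (INR n) <= a) k n0 Hfn0)
    as [N [HN [HfN HfSN]]]; [lra|].
  apply Rnot_le_lt in HfSN; rewrite S_INR in HfSN.
  assert (HxsN : xs <= INR N) by (apply le_INR in HN; lra).
  assert (Hstep : f (INR N + 1) - f (INR N) <= Derive f (INR N) * (INR N + 1 - INR N)).
  { apply sub_le_Derive_mul; [lra|].
    intros z Hz; split; [apply hC2 | apply Df_anti]; lra. }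
  assert (Derive f (INR N) <= Derive f xs) by (apply Df_anti; lra).
  exists N; split; [lia|]; split; [lra|]; split; lra.
Qed.
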